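(* Let $w$ be an integer with $w-1\equiv 1$ or $3\pmod 6$, and for $i\ge0$ let $\dot{\mathcal{D}}_i$ denote the set of $i$-dimensional subspaces of $\mathrm{GF}(2)^{w-1}$ each of which is orthogonal (over $\mathrm{GF}(2)$) to the characteristic vectors of all blocks of at least one STS$(w-1)$ on $\{1,\ldots,w-1\}$. Let $i,j$ be nonnegative integers with $i\le j$. If $\dot{\mathcal{D}}_j$ is nonempty, then every subspace from $\dot{\mathcal{D}}_i$ is contained in exactly $\dot\Gamma_{w,i,j}$ subspaces from $\dot{\mathcal{D}}_j$, where $$\dot\Gamma_{w,i,j}=\left(\left(\tfrac{w}{2^i}\right)!\right)^{2^i}\Bigg/\left(2^{\frac{(j-i)(j+i+1)}2}\left(\left(\tfrac{w}{2^j}\right)!\right)^{2^j}[j-i]_2!\right).$$ In particular, $|\dot{\mathcal{D}}_j|=\dot\Gamma_{w,0,j}$.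
   Context: A Steiner triple system STS$(n)$ on $\{1,\ldots,n\}$ is a collection of 3-subsets (blocks) such that every 2-subset is contained in exactly one block. Blocks are identified with their characteristic vectors in $\mathrm{GF}(2)^{n}$; $x\perp y$ means $\sum_t x_ty_t=0$. The $q$-factorial is $[n]_q!=\prod_{s=1}^n\sum_{r=0}^{s-1}q^r$, with $[0]_q!=1$. *)

From HB Require Import structures.
From mathcomp Require Import all_boot all_order all_algebra.
Set Implicit Arguments. Unset Strict Implicit. Unset Printing Implicit Defensive.
Import GRing.Theory.

Definition is_STS (n : nat) (B : {set {set 'I_n}}) : bool :=
  [forall b in B, #|b| == 3] &&
  [forall x : 'I_n, forall y : 'I_n,
     (x != y) ==> (#|[set b in B | (x \in b) && (y \in b)]| == 1)].

Definition charvec (n : nat) (b : {set 'I_n}) : 'rV['F_2]_n :=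
  (\row_t (t \in b)%:R)%R.

Definition orthb (n : nat) (x y : 'rV['F_2]_n) : bool :=
  (\sum_(t < n) x 0 t * y 0 t == 0)%R.

Definition is_subspace_dim (n i : nat) (U : {set 'rV['F_2]_n}) : bool :=
  [exists M : 'M['F_2]_n, (U == [set x | (x <= M)%MS]) && (\rank M == i)].

Definition Ddot (n i : nat) : {set {set 'rV['F_2]_n}} :=
  [set U | is_subspace_dim i U &&
     [exists B : {set {set 'I_n}}, is_STS B &&
        [forall b in B, forall x in U, orthb x (charvec b)]]].

Definition qfact (q n : nat) : nat :=
  \prod_(1 <= s < n.+1) \sum_(0 <= r < s) q ^ r.

(* numerator and denominator of \dot\Gamma_{w,i,j};
   (j-i)(j+i+1) is always even, so the halving is exact. *)
Definition Gamma_num (w i : nat) : nat := ((w %/ 2 ^ i)`!) ^ (2 ^ i).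
Definition Gamma_den (w i j : nat) : nat :=
  2 ^ (((j - i) * (j + i + 1)) %/ 2) * ((w %/ 2 ^ j)`!) ^ (2 ^ j) * qfact 2 (j - i).

(* A nonzero vector orthogonal to every block of an STS(n) has weight (n+1)/2:
   for a fixed s in its support S, the third point of the block through s and
   s' is a bijection from S minus s onto the complement of S.  So the spaces
   in D_j are balanced: all their nonzero vectors have weight (n+1)/2.  By
   Fourier analysis on GF(2)^j, a j x n generator matrix spans a balanced
   space iff every column vector a occurs (n+1)/2^j - [a = 0] times among its
   columns.  Hence two balanced j-spaces differ by a permutation of the
   coordinates, which carries the STS along, and a nonempty D_j consists of
   all balanced j-spaces.  A balanced i-space U extends to the balanced
   (i+1)-space U + <x> iff the support of x meets every column class of a
   generator matrix of U in half of its size (the zero class counted with one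
   extra element); this counts the extensions as a product of binomials, and
   double counting the pairs (x, V) with U + <x> <= V gives a recursion in
   j - i whose solution is Gamma_{w,i,j}. *)

From mathcomp Require Import all_boot all_algebra all_fingroup mxabelem zify ring.

Set Implicit Arguments.
Unset Strict Implicit.
Unset Printing Implicit Defensive.

Import GRing.Theory Num.Theory.

Section F2Characters.
Local Open Scope ring_scope.

Lemma F2_cases (z : 'F_2) : z = 0 \/ z = 1.
Proof. by case: z => [[|[|k]] Hk] //; [left|right]; apply: val_inj. Qed.

Lemma F2_neq0 (z : 'F_2) : (z != 0) = (z == 1).
Proof. by case: (F2_cases z) => ->. Qed.

Lemma F2_nat m : ((m%:R : 'F_2) == 0) = ~~ odd m.
Proof. by rewrite -(dvdn_pcharf (pchar_Fp (isT : prime 2))) dvdn2. Qed.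

Lemma oppmx_F2 m p (A : 'M['F_2]_(m, p)) : - A = A.
Proof. by apply/matrixP => i j; rewrite mxE (oppr_pchar2 (pchar_Fp (isT : prime 2))). Qed.

Definition sgnF2 (z : 'F_2) : int := if z == 0 then 1 else -1.

Lemma sgnF2D a b : sgnF2 (a + b) = sgnF2 a * sgnF2 b.
Proof. by case: (F2_cases a) => ->; case: (F2_cases b) => ->. Qed.

Lemma sgnF2E z : sgnF2 z = 1 - 2 * (z != 0)%:R.
Proof. by case: (F2_cases z) => ->. Qed.

Lemma sumr_eq0_sign_flip (T : finType) (F : T -> int) (h : T -> T) :
  injective h -> (forall t, F (h t) = - F t) -> \sum_t F t = 0.
Proof.
move=> h_inj hF; have := reindex_inj h_inj (op := +%R) (x := 0) (P := xpredT) (F := F).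
rewrite (eq_bigr _ (fun t _ => hF t)) sumrN => /eqP.
by rewrite -subr_eq0 opprK -mulr2n mulrn_eq0 => /eqP.
Qed.

Lemma sum_sgnF2_dot k (a : 'cV['F_2]_k) :
  \sum_(l : 'rV_k) sgnF2 ((l *m a) 0 0) = (a == 0)%:R * (2 ^ k)%:R.
Proof.
have [->|a_nz] := eqVneq a 0.
  under eq_bigr do rewrite mulmx0 mxE.
  by rewrite sumr_const card_mx card_Fp // mul1n mul1r.
have [r] : exists r, a r 0 != 0.
  apply/existsP; apply: contraR a_nz => /existsPn a0; apply/eqP/matrixP => i j.
  by rewrite (ord1 j) mxE; apply/eqP/negbNE.
rewrite F2_neq0 => ar.
rewrite mul0r; apply: (sumr_eq0_sign_flip (h := +%R^~ (delta_mx 0 r))); first exact: addIr.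
by move=> l; rewrite mulmxDl [in LHS]mxE sgnF2D -rowE [row _ _ _ _]mxE (eqP ar) mulrN1.
Qed.

Lemma sum_sgnF2_dotC k (l : 'rV['F_2]_k) :
  \sum_(a : 'cV_k) sgnF2 ((l *m a) 0 0) = (l == 0)%:R * (2 ^ k)%:R.
Proof.
rewrite -trmx_eq0 -sum_sgnF2_dot (reindex trmx); last first.
  by exists trmx => a _; rewrite trmxK.
by apply: eq_bigr => a _; rewrite -[a in RHS]trmxK -trmx_mul [_^T _ _]mxE.
Qed.

End F2Characters.

Section Weights.
Local Open Scope ring_scope.
Variable n : nat.

Definition supp (x : 'rV['F_2]_n) : {set 'I_n} := [set t | x 0 t != 0].

Definition half_weight (x : 'rV['F_2]_n) : bool := (#|supp x|).*2 == n.+1.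

Definition balanced (U : {set 'rV['F_2]_n}) : bool :=
  [forall x in U, (x != 0) ==> half_weight x].

Lemma balancedP (U : {set 'rV['F_2]_n}) :
  reflect (forall x, x \in U -> x != 0 -> half_weight x) (balanced U).
Proof.
apply: (iffP forall_inP) => [bU x /bU /implyP //|bU x xU].
by apply/implyP; apply: bU.
Qed.

Lemma balancedS (U V : {set 'rV['F_2]_n}) : U \subset V -> balanced V -> balanced U.
Proof. by move=> /subsetP sUV /balancedP bV; apply/balancedP => x /sUV; apply: bV. Qed.

Lemma supp0 : supp 0 = set0.
Proof. by apply/setP => t; rewrite !inE mxE eqxx. Qed.

Lemma supp_eq0 (x : 'rV['F_2]_n) : (supp x == set0) = (x == 0).
Proof.
apply/eqP/eqP => [x0|->]; last exact: supp0.
apply/rowP => t; apply/eqP/negbNE; rewrite mxE.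
by have := in_set0 t; rewrite -x0 inE => ->.
Qed.

Lemma sum_sgnF2_supp (x : 'rV['F_2]_n) :
  \sum_t sgnF2 (x 0 t) = n%:R - 2 * #|supp x|%:R.
Proof.
rewrite (eq_bigr _ (fun t _ => sgnF2E (x 0 t))).
rewrite sumrB sumr_const card_ord -mulr_sumr -natr_sum -sum1_card [in RHS]big_mkcond /=.
by congr (_ - 2 * _%:R); apply: eq_bigr => t _; rewrite inE; case: (_ != 0).
Qed.

Lemma mulmx_entry_col k (l : 'rV['F_2]_k) (B : 'M_(k, n)) t :
  (l *m B) 0 t = (l *m col t B) 0 0.
Proof. by rewrite colE mulmxA -colE [RHS]mxE. Qed.

Section ColumnFibers.
Variables (k : nat) (B : 'M['F_2]_(k, n)).

Definition col_fiber (a : 'cV['F_2]_k) : {set 'I_n} := [set t | col t B == a].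

Definition mx_balanced : bool :=
  [forall l : 'rV_k, (l != 0) ==> half_weight (l *m B)].

Definition col_regular : bool :=
  [forall a : 'cV_k, (#|col_fiber a| + (a == 0%R)) * 2 ^ k == n.+1]%N.

Lemma mx_balancedP :
  reflect (forall l, l != 0 -> half_weight (l *m B)) mx_balanced.
Proof.
apply: (iffP forallP) => [bB l /(implyP (bB l)) //|bB l].
by apply/implyP; apply: bB.
Qed.

Lemma col_regularP :
  reflect (forall a, (#|col_fiber a| + (a == 0%R)) * 2 ^ k = n.+1)%N col_regular.
Proof. by apply: (iffP forallP) => rB a; apply/eqP; apply: rB. Qed.

Lemma col_regular_card a : col_regular ->
  (#|col_fiber a| + (a == 0%R) = #|col_fiber 0| + 1)%N.
Proof.
move/col_regularP=> rB; apply/eqP; rewrite -(eqn_pmul2r (expn_gt0 2 k)) rB.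
by rewrite -(rB 0) eqxx.
Qed.

(* Group the coordinates t of l *m B by the column col t B; the extra
   [a == 0] term contributes the 1 in n.+1. *)
Lemma sum_sgnF2_col_fiber (l : 'rV_k) :
  \sum_(a : 'cV_k) sgnF2 ((l *m a) 0 0) * (#|col_fiber a| + (a == 0))%:R
  = n.+1%:R - 2 * #|supp (l *m B)|%:R.
Proof.
have fibers : \sum_t sgnF2 ((l *m B) 0 t) =
              \sum_(a : 'cV_k) sgnF2 ((l *m a) 0 0) * #|col_fiber a|%:R.
  rewrite (partition_big (fun t => col t B) xpredT) //=; apply: eq_bigr => a _.
  rewrite (eq_bigr (fun _ => sgnF2 ((l *m a) 0 0))) => [|t /eqP <-]; last first.
    by rewrite mulmx_entry_col.
  rewrite sumr_const mulr_natr; congr (_ *+ _).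
  by apply: eq_card => t; rewrite inE.
have zero : \sum_(a : 'cV_k) sgnF2 ((l *m a) 0 0) * (a == 0)%:R = 1.
  rewrite (bigD1 0) //= eqxx mulmx0 mxE mulr1 big1 ?addr0 // => a /negbTE ->.
  by rewrite mulr0.
under eq_bigr do rewrite natrD mulrDr.
by rewrite big_split /= zero -fibers sum_sgnF2_supp addrAC natr1.
Qed.

Lemma col_regular_mx_balanced : col_regular -> mx_balanced.
Proof.
move=> rB; apply/mx_balancedP => l l_nz.
have := sum_sgnF2_col_fiber l.
under eq_bigr do rewrite col_regular_card //.
rewrite -mulr_suml sum_sgnF2_dotC (negbTE l_nz) !mul0r => /eqP.
rewrite eq_sym subr_eq0 => /eqP wt.
by rewrite /half_weight -muln2 -(eqr_nat int) natrM mulrC wt.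
Qed.

(* Fourier inversion on GF(2)^k: only l = 0 contributes. *)
Lemma mx_balanced_col_regular : mx_balanced -> col_regular.
Proof.
move/mx_balancedP=> bB; apply/col_regularP => b.
pose c a : int := (#|col_fiber a| + (a == 0))%:R.
pose S := \sum_(l : 'rV_k) sgnF2 ((l *m b) 0 0) *
          \sum_(a : 'cV_k) sgnF2 ((l *m a) 0 0) * c a.
have S_l0 : S = n.+1%:R.
  rewrite /S /c (bigD1 0) //= [X in _ + X]big1 => [|l l_nz].
    by rewrite sum_sgnF2_col_fiber !mul0mx supp0 cards0 mxE mul1r mulr0 subr0 addr0.
  rewrite sum_sgnF2_col_fiber; have /eqP <- := bB l l_nz.
  by rewrite -mul2n natrM subrr mulr0.
have S_b : S = c b * (2 ^ k)%:R.
  rewrite /S (eq_bigr (fun l => \sum_(a : 'cV_k) sgnF2 ((l *m (a + b)) 0 0) * c a)).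
    rewrite exchange_big /= (bigD1 b) //= [X in _ + X]big1 => [|a a_b].
      by rewrite -mulr_suml sum_sgnF2_dot addr_eq0 oppmx_F2 eqxx mul1r addr0 mulrC.
    rewrite -mulr_suml sum_sgnF2_dot addr_eq0 oppmx_F2 (negbTE a_b).
    by rewrite mul0r mul0r.
  move=> l _; rewrite mulr_sumr; apply: eq_bigr => a _.
  by rewrite mulrA -sgnF2D mulmxDr [in RHS]mxE addrC.
by apply/eqP; rewrite -(eqr_nat int) natrM -S_l0 S_b.
Qed.

Lemma mx_balancedE : mx_balanced = col_regular.
Proof.
by apply/idP/idP; [apply: mx_balanced_col_regular | apply: col_regular_mx_balanced].
Qed.

Lemma mx_balanced_dvdn : mx_balanced -> (2 ^ k %| n.+1)%N.
Proof.
by rewrite mx_balancedE => /col_regularP/(_ 0) <-; apply: dvdn_mull.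
Qed.

Lemma mx_balanced_free : mx_balanced -> row_free B.
Proof.
move/mx_balancedP=> bB; rewrite -kermx_eq0; apply: contraT => /rowV0Pn [l].
by move=> /sub_kermxP lB0 /bB; rewrite lB0 /half_weight supp0 cards0.
Qed.

Lemma balanced_rowg : row_free B -> balanced (rowg B) = mx_balanced.
Proof.
move=> freeB; apply/balancedP/mx_balancedP => [bB l l_nz | bB x].
  apply: bB; first by rewrite inE submxMl.
  apply: contra l_nz => /eqP lB0; apply/eqP/(row_free_inj freeB).
  by rewrite /= lB0 mul0mx.
rewrite inE => /submxP [l ->] lB_nz; apply: bB.
by apply: contra lB_nz => /eqP ->; rewrite mul0mx.
Qed.

End ColumnFibers.

Lemma is_subspace_dimP k (U : {set 'rV['F_2]_n}) :
  reflect (exists2 B : 'M_(k, n), row_free B & U = rowg B) (is_subspace_dim k U).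
Proof.
apply: (iffP existsP) => [[M /andP[/eqP -> /eqP rkM]] | [B freeB ->]].
  rewrite -{}rkM; exists (row_base M); first exact: row_base_free.
  by apply/setP => x; rewrite !inE eq_row_base.
exists <<B>>%MS; rewrite mxrank_gen (eqP freeB) eqxx andbT.
by apply/eqP/setP => x; rewrite !inE genmxE.
Qed.

Definition balanced_subspace k (U : {set 'rV['F_2]_n}) : bool :=
  is_subspace_dim k U && balanced U.

Lemma balanced_subspaceP k (U : {set 'rV['F_2]_n}) :
  reflect (exists2 B : 'M_(k, n), mx_balanced B & U = rowg B)
          (balanced_subspace k U).
Proof.
apply: (iffP andP) => [[/is_subspace_dimP [B freeB ->]] | [B bB ->]].
  by rewrite balanced_rowg // => bB; exists B.
have freeB := mx_balanced_free bB.
by split; [apply/is_subspace_dimP; exists B | rewrite balanced_rowg].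
Qed.

Lemma balanced_subspace_rowg k (C : 'M_(k, n)) :
  row_free C -> balanced_subspace k (rowg C) = mx_balanced C.
Proof.
move=> freeC; rewrite /balanced_subspace balanced_rowg //.
by have -> : is_subspace_dim k (rowg C) by apply/is_subspace_dimP; exists C.
Qed.

Lemma card_balanced_subspace k (U : {set 'rV['F_2]_n}) :
  balanced_subspace k U -> #|U| = (2 ^ k)%N.
Proof.
case/balanced_subspaceP => B /mx_balanced_free freeB ->.
by rewrite card_rowg card_Fp // (eqP freeB).
Qed.

Lemma balanced_subspace0 : balanced_subspace 0 [set 0 : 'rV['F_2]_n].
Proof.
apply/balanced_subspaceP; exists 0; first by apply/mx_balancedP => l; rewrite thinmx0 eqxx.
by apply/setP => x; rewrite !inE; apply/eqP/idP => [-> | /submx0null]; rewrite ?sub0mx.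
Qed.

End Weights.

Lemma sum_bool_card (T : finType) (P Q : pred T) :
  \sum_(x | P x) (Q x : nat) = #|[set x | P x & Q x]|.
Proof.
rewrite -sum1dep_card big_mkcond [RHS]big_mkcond; apply: eq_bigr => x _.
by case: (P x); case: (Q x).
Qed.

Lemma card_eq_unique_partner (T T' : finType) (R : T -> T' -> bool)
    (A : {set T}) (C : {set T'}) :
  (forall a, a \in A -> #|[set c in C | R a c]| = 1) ->
  (forall c, c \in C -> #|[set a in A | R a c]| = 1) -> #|A| = #|C|.
Proof.
move=> partnerA partnerC.
transitivity (\sum_(a in A) \sum_(c in C) R a c : nat).
  by rewrite -sum1_card; apply: eq_bigr => a /partnerA <-; rewrite sum_bool_card.
rewrite exchange_big -sum1_card; apply: eq_bigr => c /partnerC <-.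
by rewrite sum_bool_card.
Qed.

Section SteinerTripleSystems.
Variables (n : nat) (B : {set {set 'I_n}}).
Hypothesis stsB : is_STS B.

Lemma STS_block_card b : b \in B -> #|b| = 3.
Proof. by case/andP: stsB => /forall_inP bB _ /bB /eqP. Qed.

Lemma STS_pair_card x y : x != y -> #|[set b in B | (x \in b) && (y \in b)]| = 1.
Proof. by case/andP: stsB => _ /forallP/(_ x)/forallP/(_ y)/implyP pB /pB/eqP. Qed.

Lemma STS_pair_block x y : x != y -> exists2 b, b \in B & (x \in b) && (y \in b).
Proof.
move/STS_pair_card/eqP/cards1P => [b bE].
have : b \in [set b] by rewrite set11.
by rewrite -bE inE => /andP[]; exists b.
Qed.

Lemma STS_block_uniq x y b b' : x != y -> b \in B -> b' \in B ->
  x \in b -> y \in b -> x \in b' -> y \in b' -> b = b'.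
Proof.
move=> /STS_pair_card/eqP/cards1P [c cE] Bb Bb' xb yb xb' yb'.
have : b \in [set c] by rewrite -cE inE Bb xb yb.
have : b' \in [set c] by rewrite -cE inE Bb' xb' yb'.
by rewrite !inE => /eqP -> /eqP ->.
Qed.

Lemma STS_block_third b x y : b \in B -> x != y -> x \in b -> y \in b ->
  exists z, [/\ z != x, z != y & b = [set x; y; z]].
Proof.
move=> Bb xy xb yb.
have xy_sub : [set x; y] \subset b by rewrite subUset !sub1set xb yb.
have : #|b :\: [set x; y]| = 1.
  by rewrite cardsD (setIidPr xy_sub) STS_block_card // cards2 xy.
move/eqP/cards1P => [z zE]; exists z.
have : z \in b :\: [set x; y] by rewrite zE set11.
rewrite !inE negb_or => /andP[/andP[zx zy] _]; split => //.
by rewrite -zE -{1}(setID b [set x; y]) (setIidPr xy_sub).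
Qed.

Definition collinear x y z := [exists b in B, [&& x \in b, y \in b & z \in b]].

Lemma collinearC x y z : collinear x y z = collinear x z y.
Proof. by apply: eq_existsb => b; rewrite [(y \in b) && _]andbC. Qed.

Lemma collinearE x y b z : x != y -> b \in B -> x \in b -> y \in b ->
  collinear x y z = (z \in b).
Proof.
move=> xy Bb xb yb; apply/exists_inP/idP => [[b' Bb' /and3P[xb' yb' zb']]|zb].
  by rewrite (STS_block_uniq xy Bb Bb' xb yb xb' yb').
by exists b => //; apply/and3P.
Qed.

Section EvenSet.
Variables (S : {set 'I_n}) (s : 'I_n).
Hypotheses (evenS : forall b, b \in B -> ~~ odd #|b :&: S|) (sS : s \in S).

Lemma STS_partner_out s' : s' \in S :\ s -> #|[set t in ~: S | collinear s s' t]| = 1.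
Proof.
rewrite !inE eq_sym => /andP[ss' s'S].
have [b Bb /andP[sb s'b]] := STS_pair_block ss'.
have [z [zs zs' bE]] := STS_block_third Bb ss' sb s'b.
have zS : z \notin S.
  apply: contraL (evenS Bb) => zS; rewrite (setIidPl _) ?STS_block_card //.
  by rewrite bE !subUset !sub1set sS s'S zS.
apply/eqP/cards1P; exists z; apply/setP => t.
rewrite !inE (collinearE _ ss' Bb sb s'b) bE !inE.
have [->|_] := eqVneq t z; first by rewrite zS !orbT.
rewrite orbF; have [->|_] := eqVneq t s; first by rewrite sS.
by have [->|_] := eqVneq t s'; rewrite ?s'S ?andbF.
Qed.

Lemma STS_partner_in t : t \in ~: S -> #|[set s' in S :\ s | collinear s s' t]| = 1.
Proof.
rewrite inE => tS; have st : s != t by apply: contraNneq tS => <-.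
have [b Bb /andP[sb tb]] := STS_pair_block st.
have [z [zs zt bE]] := STS_block_third Bb st sb tb.
have zS : z \in S.
  apply: contraLR (evenS Bb) => zS; rewrite negbK.
  suff -> : b :&: S = [set s] by rewrite cards1.
  apply/setP => u; rewrite bE !inE.
  have [->|_] := eqVneq u s; first by rewrite sS.
  have [->|_] := eqVneq u t; first by rewrite (negbTE tS) andbF.
  by have [->|_] := eqVneq u z; rewrite ?(negbTE zS) ?andbF.
apply/eqP/cards1P; exists z; apply/setP => s'.
rewrite !inE collinearC (collinearE _ st Bb sb tb) bE !inE.
have [->|_] := eqVneq s' z; first by rewrite zs zS !orbT.
rewrite orbF; have [->|_] := eqVneq s' s; first by [].
by have [->|_] := eqVneq s' t; rewrite ?(negbTE tS) ?andbF.
Qed.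

End EvenSet.

Lemma STS_even_set_card (S : {set 'I_n}) :
  (forall b, b \in B -> ~~ odd #|b :&: S|) -> S != set0 -> (#|S|).*2 = n.+1.
Proof.
move=> evenS /set0Pn [s sS].
have := card_eq_unique_partner (STS_partner_out evenS sS) (STS_partner_in evenS sS).
have : (#|S| <= n)%N by rewrite -[n in (_ <= n)%N]card_ord max_card.
rewrite [#|~: S|]cardsCs setCK card_ord [#|S|](cardsD1 s) sS add1n.
by move: #|S :\ s| => m; lia.
Qed.

End SteinerTripleSystems.

Lemma orthb_charvec n (x : 'rV['F_2]_n) b :
  orthb x (charvec b) = ~~ odd #|b :&: supp x|.
Proof.
rewrite /orthb -F2_nat -sum1_card natr_sum [in RHS]big_mkcond /=.
congr (_ == 0%R); apply: eq_bigr => t _; rewrite !inE !mxE.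
by case: (F2_cases (x 0%R t)) => ->; case: (t \in b); rewrite ?mulr0 ?mulr1.
Qed.

Lemma Ddot_balanced_subspace n k U : U \in Ddot n k -> balanced_subspace k U.
Proof.
rewrite inE => /andP[dimU /existsP[B /andP[stsB /forall_inP orthB]]].
rewrite /balanced_subspace dimU; apply/balancedP => x xU x_nz.
apply/eqP/(STS_even_set_card stsB); last by rewrite supp_eq0.
by move=> b Bb; rewrite -orthb_charvec; move/forall_inP: (orthB b Bb); apply.
Qed.

Lemma eq_fiber_card_perm (T : finType) k (f g : 'I_k -> T) :
  (forall a, #|[set t | f t == a]| = #|[set t | g t == a]|) ->
  exists s : 'S_k, forall t, f t = g (s t).
Proof.
move=> fiberE.
have /tuple_permP [s fgE] : perm_eq [tuple f t | t < k] [tuple g t | t < k].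
  apply/allP => a _; rewrite /= !count_map -!enumT -!sum1_count !big_enum_cond /=.
  by rewrite !sum1dep_card fiberE.
exists s => t; have := congr1 (fun u : k.-tuple T => tnth u t) (val_inj fgE).
by rewrite !tnth_mktuple.
Qed.

Lemma col_regular_perm n k (B C : 'M['F_2]_(k, n)) :
  col_regular B -> col_regular C -> exists s : 'S_n, forall t, col t B = col (s t) C.
Proof.
move=> /col_regularP rB /col_regularP rC.
apply: (eq_fiber_card_perm (f := fun t => col t B) (g := fun t => col t C)) => a.
apply/eqP; rewrite -(eqn_add2r (a == 0%R)) -(eqn_pmul2r (expn_gt0 2 k)).
by move: (rB a) (rC a); rewrite /col_fiber => -> ->.
Qed.

Lemma is_STS_preimset n (s : 'S_n) (B : {set {set 'I_n}}) :
  is_STS B -> is_STS [set s @^-1: (b : {set 'I_n}) | b in B].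
Proof.
move=> stsB; apply/andP; split.
  apply/forall_inP => _ /imsetP[b Bb ->].
  by rewrite card_preimset ?(STS_block_card stsB) //; apply: perm_inj.
apply/forallP => x; apply/forallP => y; apply/implyP => xy.
have sxy : s x != s y by rewrite (inj_eq perm_inj).
have preim_inj : injective (fun b : {set 'I_n} => s @^-1: b).
  move=> b1 b2 /setP b12; apply/setP => u.
  by have := b12 ((s^-1)%g u); rewrite !inE permKV.
rewrite -(STS_pair_card stsB sxy) -[#|[set b in B | _]|](card_imset _ preim_inj).
apply/eqP/eq_card => b'.
rewrite inE; apply/andP/imsetP => [[/imsetP[b Bb ->]] | [b]].
  by rewrite !inE => xyb; exists b; rewrite // inE Bb.
by rewrite inE => /andP[Bb xyb] ->; rewrite imset_f // !inE.
Qed.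

Lemma orthb_perm n (s : 'S_n) (x y : 'rV['F_2]_n) (b : {set 'I_n}) :
  (forall t, x 0%R t = y 0%R (s t)) ->
  orthb x (charvec (s @^-1: b)) = orthb y (charvec b).
Proof.
move=> xyE; rewrite /orthb [in RHS](reindex_inj (@perm_inj _ s)) /=.
by congr (_ == 0%R); apply: eq_bigr => t _; rewrite xyE !mxE inE.
Qed.

Lemma DdotE n j : Ddot n j != set0 -> Ddot n j = [set V | balanced_subspace j V].
Proof.
case/set0Pn => V0 V0j; apply/setP => V; rewrite [RHS]inE.
apply/idP/idP => [/Ddot_balanced_subspace // | balV].
rewrite inE; case/andP: (balV) => -> _ /=; case/balanced_subspaceP: balV => C balC ->.
have /balanced_subspaceP[B0 balB0 V0E] := Ddot_balanced_subspace V0j.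
move: V0j; rewrite inE V0E => /andP[_ /existsP[T /andP[stsT /forall_inP orthT]]].
rewrite !mx_balancedE in balC balB0; have [s colCB] := col_regular_perm balC balB0.
apply/existsP; exists [set s @^-1: (b : {set 'I_n}) | b in T]; rewrite is_STS_preimset //=.
apply/forall_inP => _ /imsetP[b Tb ->]; apply/forall_inP => x; rewrite inE => /submxP[l ->].
rewrite (orthb_perm (y := l *m B0)) => [|t]; last first.
  by rewrite [LHS]mulmx_entry_col [RHS]mulmx_entry_col colCB.
by move/forall_inP: (orthT b Tb); apply; rewrite inE submxMl.
Qed.

Lemma card_set_meets_fibers (T A : finType) (L : T -> A) (h : A -> nat) :
  #|[set S : {set T} | [forall a, #|S :&: [set t | L t == a]| == h a]]| =
  \prod_a 'C(#|[set t | L t == a]|, h a).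
Proof.
pose fiber a := [set t | L t == a].
have fiberP t a : (t \in fiber a) = (L t == a) by rewrite inE.
pose choice a := [pred X : {set T} | (X \subset fiber a) && (#|X| == h a)].
have -> : \prod_a 'C(#|fiber a|, h a) = #|family choice|.
  rewrite card_family foldrE big_map big_enum /=; apply: eq_bigr => a _.
  by rewrite -cards_draws; apply: eq_card => X; rewrite inE.
pose restrict (S : {set T}) := [ffun a => S :&: fiber a].
have restrict_inj : injective restrict.
  move=> S1 S2 /ffunP/(_ _)/setP S12; apply/setP => t.
  by have := S12 (L t) t; rewrite !ffunE !inE eqxx !andbT.
rewrite -(card_imset _ restrict_inj); apply: eq_card => F; apply/imsetP/familyP.
  case=> S; rewrite inE => /forallP cardS -> a.
  by rewrite ffunE inE subsetIr cardS.
move=> FP; have Fsub a t : t \in F a -> L t = a.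
  by case/andP: (FP a) => /subsetP/(_ t) sub _ /sub; rewrite fiberP => /eqP.
have FE a : (\bigcup_b F b) :&: fiber a = F a.
  apply/setP => t; rewrite !inE; apply/andP/idP => [[/bigcupP[b _ tb] /eqP <-] | ta].
    by rewrite (Fsub b t tb).
  by split; [apply/bigcupP; exists a | rewrite (Fsub a t ta)].
exists (\bigcup_b F b); last by apply/ffunP => a; rewrite ffunE FE.
by rewrite inE; apply/forallP => a; rewrite FE; case/andP: (FP a).
Qed.

Lemma mul2_bin_half h : 0 < h -> 'C(h.*2.-1, h) * 2 = 'C(h.*2, h).
Proof.
move=> h_gt0; have := mul_bin_down h.*2 h.
rewrite -addnn addnK => E; apply/eqP; rewrite -(eqn_pmul2l h_gt0) -E; apply/eqP; lia.
Qed.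

Lemma bin_half_factorial h N : 0 < h -> 0 < N ->
  'C(h.*2.-1, h) * 'C(h.*2, h) ^ N.-1 * 2 * h`! ^ N.*2 = (h.*2)`! ^ N.
Proof.
move=> h_gt0 N_gt0.
rewrite -[_ * _ * 2]mulnA [_ ^ _ * 2]mulnC mulnA mul2_bin_half // -expnS prednK //.
rewrite -[N.*2]mul2n expnM -expnMn; congr (_ ^ N).
have h_le : h <= h.*2 by rewrite -addnn leq_addr.
by rewrite -(bin_fact h_le) -addnn addnK.
Qed.

Lemma row_free_col_mx (F : fieldType) k n (B : 'M[F]_(k, n)) (x : 'rV_n) :
  row_free B -> row_free (col_mx B x) = ~~ (x <= B)%MS.
Proof.
move=> freeB; rewrite /row_free -addsmxE addn1.
have [xB | xNB] := boolP (x <= B)%MS.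
  by rewrite (addsmx_idPl xB) (eqP freeB) ltn_eqF.
have x_nz : x != 0%R by apply: contraNneq xNB => ->; rewrite sub0mx.
rewrite mxrank_disjoint_sum ?rank_rV ?x_nz ?(eqP freeB) ?addn1 ?eqxx //.
apply/eqP/rowV0P => v; rewrite sub_capmx => /andP[vB /sub_rVP[a va]].
have [a0 | a_nz] := eqVneq a 0%R; first by rewrite va a0 scale0r.
by move: vB; rewrite va (eqmx_scale _ a_nz) (negbTE xNB).
Qed.

Lemma supp_bij n : bijective (@supp n).
Proof.
exists (@charvec n) => [x | S]; last first.
  by apply/setP => t; rewrite !inE mxE; case: (t \in S).
by apply/rowP => t; rewrite !mxE inE; case: (F2_cases (x 0%R t)) => ->.
Qed.

Lemma scalar_mx_eq0 (R : pzRingType) m (c : R) : (c%:M == 0 :> 'M_m.+1)%R = (c == 0)%R.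
Proof.
apply/eqP/eqP => [/(congr1 (fun M : 'M_m.+1 => M 0%R 0%R)) | ->]; first by rewrite !mxE.
by apply/matrixP => i j; rewrite !mxE mul0rn.
Qed.

Section Extension.
Variables (n k : nat) (B : 'M['F_2]_(k, n)).
Hypothesis regB : col_regular B.

Definition bisects (x : 'rV['F_2]_n) : bool :=
  [forall a, (#|col_fiber B a :&: supp x|).*2 == #|col_fiber B 0%R| + 1].

Lemma col_fiber_col_mx x a (c : 'F_2) :
  col_fiber (col_mx B x) (col_mx a c%:M) = [set t in col_fiber B a | x 0%R t == c].
Proof.
apply/setP => t; rewrite !inE col_col_mx.
apply/eqP/andP => [/eq_col_mx[-> /(congr1 (fun M : 'cV_1 => M 0%R 0%R))] | [/eqP -> /eqP <-]].
  by rewrite !mxE eqxx => ->.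
by congr col_mx; apply/rowP => i; rewrite (ord1 i) !mxE.
Qed.

Lemma col_regular_col_mx x : col_regular (col_mx B x) = bisects x.
Proof.
set m := (#|col_fiber B 0%R| + 1)%N; pose meet a := #|col_fiber B a :&: supp x|.
have fiberB a : (#|col_fiber B a| + (a == 0%R))%N = m by apply: col_regular_card.
have meet_le a : (meet a <= #|col_fiber B a|)%N by rewrite subset_leq_card ?subsetIl.
have card1 a : #|col_fiber (col_mx B x) (col_mx a 1%:M)| = meet a.
  by rewrite col_fiber_col_mx; apply: eq_card => t; rewrite !inE F2_neq0.
have card0 a : #|col_fiber (col_mx B x) (col_mx a 0%:M)| = (#|col_fiber B a| - meet a)%N.
  by rewrite col_fiber_col_mx -cardsD; apply: eq_card => t; rewrite !inE negbK andbC.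
have regE N : (N * 2 ^ (k + 1) == n.+1) = (N.*2 == m).
  rewrite -(col_regularP _ regB 0%R) eqxx -/m addn1 expnS mulnA.
  by rewrite eqn_pmul2r ?expn_gt0 // muln2.
apply/forallP/forallP => [regBx a | bis a'].
  have := regBx (col_mx a 1%:M).
  by rewrite regE col_mx_eq0 scalar_mx_eq0 oner_eq0 andbF addn0 card1.
rewrite -[a']vsubmxK (mx11_scalar (dsubmx a')) regE col_mx_eq0 scalar_mx_eq0.
set a := usubmx a'; move: (eqP (bis a)) (fiberB a) (meet_le a).
have [-> | ->] := F2_cases (dsubmx a' 0%R 0%R);
  rewrite ?card0 ?card1 ?eqxx ?oner_eq0 ?andbT ?andbF /meet -/m;
  case: (a == 0%R) => /= E1 E2 E3; apply/eqP; lia.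
Qed.

Lemma card_bisects h : (#|col_fiber B 0%R| + 1 = h.*2)%N ->
  #|[set x | bisects x]| = 'C(h.*2.-1, h) * 'C(h.*2, h) ^ (2 ^ k).-1.
Proof.
move=> hB.
have -> : [set x | bisects x] =
          @supp n @^-1: [set S | [forall a, #|S :&: [set t | col t B == a]| == h]].
  apply/setP => x; rewrite !inE /bisects hB; apply: eq_forallb => a.
  by rewrite setIC (can_eq doubleK).
rewrite on_card_preimset; last exact: onW_bij (@supp_bij n).
have fiberE a : #|[set t | col t B == a]| = (h.*2 - (a == 0%R))%N.
  by rewrite -hB -(col_regular_card a regB) addnK.
rewrite card_set_meets_fibers (bigD1 0%R) //= fiberE eqxx subn1.
rewrite (eq_bigr (fun _ => 'C(h.*2, h))) => [|a /negbTE a_nz]; last first.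
  by rewrite fiberE a_nz subn0.
by rewrite prod_nat_const cardC1 card_mx card_Fp // muln1.
Qed.

End Extension.

Section Adjoin.
Local Open Scope ring_scope.
Variable n : nat.

Definition adjoin (U : {set 'rV['F_2]_n}) x : {set 'rV_n} := U :|: [set u + x | u in U].

Lemma adjoin_rowg k (B : 'M['F_2]_(k, n)) x : adjoin (rowg B) x = rowg (col_mx B x).
Proof.
apply/setP => y; rewrite !inE -addsmxE; apply/orP/idP => [[yB | /imsetP[u uB ->]] | ].
- exact: submx_trans yB (addsmxSl _ _).
- by rewrite inE in uB; rewrite addmx_sub ?addsmxSr // (submx_trans uB) ?addsmxSl.
case/sub_addsmxP => [[u c]] /= ->; rewrite (mx11_scalar c) mul_scalar_mx.
have [-> | ->] := F2_cases (c 0 0); [left | right]; first by rewrite scale0r addr0 submxMl.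
by apply/imsetP; exists (u *m B); rewrite ?inE ?submxMl ?scale1r.
Qed.

Lemma subset_adjoin (U : {set 'rV['F_2]_n}) x : U \subset adjoin U x.
Proof. exact: subsetUl. Qed.

Lemma adjoin_subset k (C : 'M['F_2]_(k, n)) (U : {set 'rV_n}) x :
  U \subset rowg C -> x \in rowg C -> adjoin U x \subset rowg C.
Proof.
move=> /subsetP UC xC; rewrite subUset; apply/andP; split; first exact/subsetP.
by apply/subsetP => _ /imsetP[u /UC uC ->]; move: uC xC; rewrite !inE; apply: addmx_sub.
Qed.

Lemma mem_adjoin (U : {set 'rV['F_2]_n}) x : 0 \in U -> x \in adjoin U x.
Proof. by move=> U0; apply/setUP; right; apply/imsetP; exists 0; rewrite ?add0r. Qed.

End Adjoin.

Lemma qfact2S d : qfact 2 d.+1 = qfact 2 d * (2 ^ d.+1).-1.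
Proof. by rewrite /qfact big_nat_recr //= predn_exp mul1n big_mkord. Qed.

Lemma Gamma_den_step w i j : i < j ->
  Gamma_den w i j = 2 * (2 ^ j - 2 ^ i) * Gamma_den w i.+1 j.
Proof.
move=> ij; have [d ->] : exists d, j = i + d.+1 by exists (j - i.+1); lia.
rewrite /Gamma_den (_ : i + d.+1 - i = d.+1) 1?(_ : i + d.+1 - i.+1 = d); [|lia|lia].
have -> : d.+1 * (i + d.+1 + i + 1) = i.+1 * 2 + d * (i + d.+1 + i.+1 + 1) by nia.
rewrite divnMDl //; set E := _ %/ 2; set F := _`! ^ _.
rewrite qfact2S expnD [2 ^ (i + d.+1)]expnD -[X in _ - X]muln1 -mulnBr subn1 expnS.
ring.
Qed.

Lemma Gamma_den_diag w i : Gamma_den w i i = Gamma_num w i.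
Proof. by rewrite /Gamma_den subnn mul0n div0n /qfact big_geq // mul1n muln1. Qed.

Lemma Gamma_numE c i : Gamma_num (c * 2 ^ i) i = c`! ^ 2 ^ i.
Proof. by rewrite /Gamma_num mulnK ?expn_gt0. Qed.

Section Superspaces.
Variable n : nat.
Implicit Types (U V : {set 'rV['F_2]_n}) (x : 'rV['F_2]_n).

Definition extensions k U : {set 'rV['F_2]_n} :=
  [set x | (x \notin U) && balanced_subspace k.+1 (adjoin U x)].

Definition n_superspaces j U : nat := #|[set V | balanced_subspace j V & U \subset V]|.

Lemma extensions_rowg k (B : 'M_(k, n)) :
  mx_balanced B -> extensions k (rowg B) = [set x | bisects B x].
Proof.
move=> balB; have freeB := mx_balanced_free balB.
apply/setP => x; rewrite !inE adjoin_rowg -col_regular_col_mx -?mx_balancedE //.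
rewrite -(row_free_col_mx x freeB); have [freeBx | ] := boolP (row_free _).
  by rewrite -addn1 balanced_subspace_rowg.
by move=> notfree; apply/esym/negbTE; apply: contra notfree; apply: mx_balanced_free.
Qed.

Lemma card_extensions k (B : 'M_(k, n)) h :
  mx_balanced B -> (#|col_fiber B 0%R| + 1 = h.*2)%N ->
  #|extensions k (rowg B)| * 2 * h`! ^ (2 ^ k.+1) = (h.*2)`! ^ (2 ^ k).
Proof.
move=> balB hB; have h_gt0 : 0 < h by case: h hB; rewrite ?addn1.
rewrite extensions_rowg // (card_bisects _ hB) -?mx_balancedE // expnS mul2n.
exact: bin_half_factorial (expn_gt0 2 k).
Qed.

Lemma balanced_subspace_adjoin k j U V x :
  balanced_subspace k U -> balanced_subspace j V -> U \subset V ->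
  x \in V -> x \notin U -> balanced_subspace k.+1 (adjoin U x).
Proof.
case/balanced_subspaceP => B balB ->; case/balanced_subspaceP => C balC -> BC xC xB.
have freeBx : row_free (col_mx B x).
  by rewrite row_free_col_mx ?mx_balanced_free //; rewrite inE in xB.
rewrite adjoin_rowg -addn1 balanced_subspace_rowg // -balanced_rowg //.
apply: balancedS (_ : rowg (col_mx B x) \subset rowg C) _.
  by rewrite -adjoin_rowg adjoin_subset.
by rewrite balanced_rowg ?mx_balanced_free.
Qed.

Lemma extensions_in_superspace k j U V :
  balanced_subspace k U -> balanced_subspace j V ->
  [set x in extensions k U | adjoin U x \subset V] = if U \subset V then V :\: U else set0.
Proof.
move=> balU balV.
have U0 : 0%R \in U by case/balanced_subspaceP: balU => B _ ->; rewrite inE sub0mx.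
have [UV | notUV] := boolP (U \subset V); apply/setP => x; rewrite !inE; last first.
  by apply/negbTE; apply: contra notUV => /andP[_]; apply: subset_trans (subset_adjoin U x).
have [xV | xNV] := boolP (x \in V); last first.
  rewrite andbF; apply/negbTE; apply: contra xNV => /andP[_ /subsetP]; apply.
  exact: mem_adjoin.
rewrite andbT; have [// | xNU] := boolP (x \in U).
rewrite (balanced_subspace_adjoin balU balV) //=.
have [C _ VE] := balanced_subspaceP _ _ balV.
by rewrite VE adjoin_subset -?VE.
Qed.

Lemma sum_n_superspaces_extensions k j U : balanced_subspace k U ->
  \sum_(x in extensions k U) n_superspaces j (adjoin U x) =
  n_superspaces j U * (2 ^ j - 2 ^ k).
Proof.
move=> balU; rewrite /n_superspaces -sum_bool_card big_distrl /=.
under eq_bigr do rewrite -sum_bool_card.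
rewrite exchange_big /=; apply: eq_bigr => V balV.
rewrite sum_bool_card (extensions_in_superspace balU balV).
have [UV | _] := boolP (U \subset V); last by rewrite cards0.
rewrite mul1n cardsD (setIidPr UV).
by rewrite (card_balanced_subspace balU) (card_balanced_subspace balV).
Qed.

Lemma n_superspaces_diag i U : balanced_subspace i U -> n_superspaces i U = 1%N.
Proof.
move=> balU; rewrite /n_superspaces (_ : [set V | _ & _] = [set U]) ?cards1 //.
apply/setP => V.
rewrite !inE; apply/andP/eqP => [[balV UV] | ->]; last by rewrite balU subxx.
apply/esym/eqP; rewrite eqEcard UV.
by rewrite (card_balanced_subspace balU) (card_balanced_subspace balV) leqnn.
Qed.

Lemma n_superspaces_Gamma i j U : (2 ^ j %| n.+1)%N -> i <= j -> balanced_subspace i U ->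
  n_superspaces j U * Gamma_den n.+1 i j = Gamma_num n.+1 i.
Proof.
move=> + ij; rewrite -(subnK ij); move: (j - i) => d {ij}.
elim: d i U => [|d IH] i U w_dvd balU.
  by rewrite add0n n_superspaces_diag // mul1n Gamma_den_diag.
have [B balB UE] := balanced_subspaceP _ _ balU.
have fiberE : ((#|col_fiber B 0%R| + 1) * 2 ^ i = n.+1)%N.
  by have /col_regularP/(_ 0%R) := mx_balanced_col_regular balB; rewrite eqxx.
have [h hB] : exists h, (#|col_fiber B 0%R| + 1 = h.*2)%N.
  have : (2 ^ i.+1 %| (#|col_fiber B 0%R| + 1) * 2 ^ i)%N.
    by rewrite fiberE (dvdn_trans _ w_dvd) // dvdn_exp2l // addSn ltnS leq_addl.
  by rewrite expnS dvdn_pmul2r ?expn_gt0 // => /dvdnP[q ->]; exists q; rewrite muln2.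
have wE : n.+1 = (h.*2 * 2 ^ i)%N by rewrite -hB fiberE.
have extE := card_extensions balB hB; rewrite -UE in extE.
have sumE : (\sum_(x in extensions i U) n_superspaces (d.+1 + i) (adjoin U x) *
             Gamma_den n.+1 i.+1 (d.+1 + i) = #|extensions i U| * h`! ^ 2 ^ i.+1)%N.
  rewrite -sum_nat_const; apply: eq_bigr => x; rewrite inE => /andP[_ balUx].
  by rewrite addSnnS IH -?addSnnS // wE -mul2n mulnAC -expnS mulnC Gamma_numE.
rewrite -big_distrl /= sum_n_superspaces_extensions // in sumE.
rewrite Gamma_den_step; last by rewrite addSn ltnS leq_addl.
by rewrite [in RHS]wE Gamma_numE -extE [RHS]mulnAC -sumE; ring.
Qed.

End Superspaces.

(* w = n.+1, so w - 1 = n *)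
Theorem lemma7 (n : nat) (hn : (n %% 6 = 1) \/ (n %% 6 = 3)) (i j : nat)
  (hij : i <= j) (hDj : Ddot n j != set0) :
  (forall U, U \in Ddot n i ->
     #|[set V in Ddot n j | U \subset V]| * Gamma_den n.+1 i j = Gamma_num n.+1 i)
  /\ #|Ddot n j| * Gamma_den n.+1 0 j = Gamma_num n.+1 0.
Proof.
(* hn only guarantees that an STS(n) exists; hDj already provides one. *)
have DE := DdotE hDj.
have w_dvd : 2 ^ j %| n.+1.
  by case/set0Pn: hDj => V; rewrite DE inE => /balanced_subspaceP[B /mx_balanced_dvdn].
have superE U :
    [set V in Ddot n j | U \subset V] = [set V | balanced_subspace j V & U \subset V].
  by apply/setP => V; rewrite DE !inE.
split => [U /Ddot_balanced_subspace balU | ].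
  by rewrite superE; apply: n_superspaces_Gamma.
have -> : #|Ddot n j| = n_superspaces j [set 0%R : 'rV['F_2]_n].
  rewrite DE; apply: eq_card => V; rewrite !inE; have [balV | //] := boolP (_ j V).
  by case/balanced_subspaceP: balV => C _ ->; rewrite sub1set inE sub0mx.
exact: n_superspaces_Gamma w_dvd (leq0n j) (balanced_subspace0 n).
Qed.
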